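(* Let $G$ be a bipartite graph and let $X$ be a vertex parameter. Then the token sliding $X$-reconfiguration graph $\mathcal{R}^{\mathrm{TS}}_X(G)$ is bipartite.
   Context: All graphs are finite and simple. A graph parameter $X$ is a vertex parameter if there is a property $x$ of vertex subsets such that for every graph $G$, $X(G)$ equals either (for every graph) the maximum, or (for every graph) the minimum, of $|B|$ over all $B\subseteq V(G)$ having property $x$ in $G$. The token sliding $X$-reconfiguration graph $\mathcal{R}^{\mathrm{TS}}_X(G)$ has as vertices all sets $S\subseteq V(G)$ with $|S|=X(G)$ having property $x$ in $G$; two such sets $S_1,S_2$ are adjacent iff there exist $v_1\in S_1\setminus S_2$, $v_2\in S_2\setminus S_1$ with $S_1\setminus\{v_1\}=S_2\setminus\{v_2\}$ and $v_1v_2\in E(G)$. *)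

From mathcomp Require Import all_boot.
Set Implicit Arguments. Unset Strict Implicit. Unset Printing Implicit Defensive.

Definition simple_graph (T : finType) (e : rel T) : Prop :=
  irreflexive e /\ symmetric e.

Definition bipartite (T : finType) (e : rel T) : Prop :=
  exists A : {set T}, forall u v, e u v -> (u \in A) != (v \in A).

Definition vprop := forall (T : finType) (e : rel T), {set T} -> bool.
Definition gparam := forall (T : finType) (e : rel T), nat.

Definition is_max_card (T : finType) (P : {set T} -> bool) (k : nat) : Prop :=
  (exists B : {set T}, P B /\ #|B| = k) /\ (forall B : {set T}, P B -> #|B| <= k).
Definition is_min_card (T : finType) (P : {set T} -> bool) (k : nat) : Prop :=
  (exists B : {set T}, P B /\ #|B| = k) /\ (forall B : {set T}, P B -> k <= #|B|).

Definition vertex_parameter_for (X : gparam) (x : vprop) : Prop :=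
  (forall (T : finType) (e : rel T), simple_graph e ->
     is_max_card (x T e) (X T e)) \/
  (forall (T : finType) (e : rel T), simple_graph e ->
     is_min_card (x T e) (X T e)).

Definition vertex_parameter (X : gparam) : Prop :=
  exists x : vprop, vertex_parameter_for X x.

Definition ts_vertex (X : gparam) (x : vprop) (T : finType) (e : rel T)
  (S : {set T}) : Prop := #|S| = X T e /\ x T e S.

Definition ts_adj (T : finType) (e : rel T) (S1 S2 : {set T}) : Prop :=
  exists v1 v2 : T, [/\ v1 \in S1 :\: S2, v2 \in S2 :\: S1,
                        S1 :\ v1 = S2 :\ v2 & e v1 v2].

Definition bipartite_on (U : Type) (V : U -> Prop) (adj : U -> U -> Prop) : Prop :=
  exists c : U -> bool, forall S1 S2, V S1 -> V S2 -> adj S1 S2 -> c S1 != c S2.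

From mathcomp Require Import all_boot.

Set Implicit Arguments.
Unset Strict Implicit.
Unset Printing Implicit Defensive.

(* Fix a side A of the bipartition and colour each vertex set S by the parity
   of |S ∩ A|.  A token slide replaces one vertex v1 of S by a neighbour v2,
   and exactly one of v1, v2 lies in A, so the parity flips.  Neither the
   vertex parameter nor the property x plays any role: the colouring is proper
   on the token sliding graph of all vertex subsets. *)

Lemma card_setI_D1 (T : finType) (A S : {set T}) (v : T) : v \in S ->
  #|S :&: A| = (v \in A) + #|(S :\ v) :&: A|.
Proof. by move=> vS; rewrite (cardsD1 v (S :&: A)) inE vS setIDAC. Qed.

Lemma ts_adj_odd_setI (T : finType) (e : rel T) (A : {set T})
    (S1 S2 : {set T}) :
  (forall u v, e u v -> (u \in A) != (v \in A)) ->
  ts_adj e S1 S2 -> odd #|S1 :&: A| != odd #|S2 :&: A|.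
Proof.
move=> hA [v1 [v2 [/setDP[v1S1 _] /setDP[v2S2 _] S12 e12]]].
rewrite (card_setI_D1 A v1S1) (card_setI_D1 A v2S2) S12 !oddD.
by move: (hA _ _ e12); case: (v1 \in A); case: (v2 \in A) => //=; case: (odd _).
Qed.

Theorem theorem2p16 (X : gparam) (x : vprop)
  (hX : vertex_parameter_for X x)
  (T : finType) (e : rel T) (hG : simple_graph e) (hbip : bipartite e) :
  bipartite_on (ts_vertex X x e) (ts_adj e).
Proof.
case: hbip => A hA.
exists (fun S => odd #|S :&: A|) => S1 S2 _ _.
exact: ts_adj_odd_setI.
Qed.
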